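(* Let $N\ge 2$ be an integer. Let $G$ be a finite, simple, bipartite graph with adjacency matrix $A$ such that (i) every vertex of $G$ has degree $N-1$, and (ii) for every edge $\{p,q\}$ of $G$, $(A^{3})_{pq}=\frac{(N-1)^{3}+1}{N}$ and $(A^{5})_{pq}=\frac{(N-1)^{5}+1}{N}$. Then for any two distinct vertices $p\neq q$ of $G$, $(A^2)_{pq}\le N-2$.
   Context: $(A^2)_{pq}$ is the number of walks of length 2 from $p$ to $q$. *)

From mathcomp Require Import all_boot all_order all_algebra.
Set Implicit Arguments. Unset Strict Implicit. Unset Printing Implicit Defensive.
Import GRing.Theory Num.Theory.
Local Open Scope ring_scope.

Definition simple_graph (n : nat) (e : rel 'I_n) : Prop :=
  (forall x, ~~ e x x) /\ (forall x y, e x y = e y x).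

Definition bipartite (n : nat) (e : rel 'I_n) : Prop :=
  exists c : 'I_n -> bool, forall x y, e x y -> c x != c y.

Definition degree (n : nat) (e : rel 'I_n) (x : 'I_n) : nat := #|[set y | e x y]|.

Definition adj (n : nat) (e : rel 'I_n) : 'M[rat]_n :=
  \matrix_(i, j) (e i j)%:R.

(* k-th power of a square matrix (works for every n, including n = 0). *)
Definition mxpow (n : nat) (A : 'M[rat]_n) (k : nat) : 'M[rat]_n :=
  iter k (fun B => A *m B) 1%:M.

From mathcomp Require Import all_boot all_order all_algebra.
From mathcomp Require Import ring.

Set Implicit Arguments.
Unset Strict Implicit.
Unset Printing Implicit Defensive.

(* Fix p, let d = N - 1 and c w = (A^2)_pw.  The hypotheses on A^3 and A^5
   give the sum d^2 - d and the sum of squares (d^2 - d)^2 of the entries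
   (A^3)_pu over the non-neighbours u of p; a nonnegative vector whose sum
   squared equals its sum of squares has at most one nonzero entry.  If c w > 0
   then every non-neighbour of p adjacent to w is reached by a 3-walk from p,
   so w has at most one neighbour outside N(p), i.e. c w >= d - 1.  Finally
   sum_w c w (c w - (d - 1)) = d, the term w = p alone contributes d, and the
   other terms are nonnegative. *)

Import Order.TTheory GRing.Theory Num.Theory.
Local Open Scope ring_scope.

Lemma mxpowS n (A : 'M[rat]_n) k : mxpow A k.+1 = A *m mxpow A k.
Proof. by []. Qed.

Lemma mxpowSr n (A : 'M[rat]_n) k : mxpow A k.+1 = mxpow A k *m A.
Proof.
elim: k => [|k IHk]; first by rewrite mxpowS /= mulmx1 mul1mx.
by rewrite [in LHS]mxpowS [in LHS]IHk mulmxA.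
Qed.

Lemma mxpowD n (A : 'M[rat]_n) k l : mxpow A (k + l) = mxpow A k *m mxpow A l.
Proof.
elim: k => [|k IHk]; first by rewrite /= mul1mx.
by rewrite addSn !mxpowS IHk mulmxA.
Qed.

Lemma mxpow_tr n (A : 'M[rat]_n) k : (mxpow A k)^T = mxpow A^T k.
Proof.
elim: k => [|k IHk]; first by rewrite /= trmx1.
by rewrite mxpowS trmx_mul IHk mxpowSr.
Qed.

Lemma sqr_sum_eq_sum_sqr (R : numDomainType) (I : finType) (F : I -> R) :
  (forall i, 0 <= F i) -> (\sum_i F i) ^+ 2 = \sum_i F i ^+ 2 ->
  forall i j, i != j -> F i * F j = 0.
Proof.
move=> F_ge0 sum_eq i j ij.
have cross0 : \sum_i \sum_(j | j != i) F i * F j = 0.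
  have split_sqr : (\sum_i F i) ^+ 2 =
      \sum_i F i ^+ 2 + \sum_i \sum_(j | j != i) F i * F j.
    rewrite expr2 mulr_suml -big_split; apply: eq_bigr => x _.
    by rewrite mulr_sumr (bigD1 x) //= expr2.
  by apply: (addrI (\sum_i F i ^+ 2)); rewrite addr0 -split_sqr.
have cross_ge0 x : 0 <= \sum_(j | j != x) F x * F j.
  by apply: sumr_ge0 => y _; rewrite mulr_ge0.
have row0 := psumr_eq0P (fun x _ => cross_ge0 x) cross0 (i := i) isT.
by apply: (psumr_eq0P _ row0); rewrite 1?eq_sym // => y _; rewrite mulr_ge0.
Qed.

Lemma cube_add1_div (F : fieldType) (x : F) :
  x + 1 != 0 -> (x ^+ 3 + 1) / (x + 1) = x ^+ 2 - x + 1.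
Proof.
move=> x1_neq0; rewrite -[x ^+ 3 + 1](_ : (x ^+ 2 - x + 1) * (x + 1) = _).
  by rewrite mulfK.
by ring.
Qed.

Lemma pow5_add1_div (F : fieldType) (x : F) :
  x + 1 != 0 -> (x ^+ 5 + 1) / (x + 1) = x ^+ 4 - x ^+ 3 + x ^+ 2 - x + 1.
Proof.
move=> x1_neq0.
rewrite -[x ^+ 5 + 1](_ : (x ^+ 4 - x ^+ 3 + x ^+ 2 - x + 1) * (x + 1) = _).
  by rewrite mulfK.
by ring.
Qed.

Section RegularGraph.

Variables (n d : nat) (e : rel 'I_n).

Local Notation W k := (mxpow (adj e) k).
Local Notation dr := (d%:R : rat).

Lemma mxpow1E i j : W 1 i j = (e i j)%:R.
Proof. by rewrite mxpowS /= mulmx1 mxE. Qed.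

Lemma mxpowSE k i j : W k.+1 i j = \sum_(m | e i m) W k m j.
Proof.
rewrite mxpowS mxE [RHS]big_mkcond /=; apply: eq_bigr => m _.
by rewrite mxE; case: (e i m); rewrite ?mul1r ?mul0r.
Qed.

Lemma mxpowDE k l i j : W (k + l) i j = \sum_x W k i x * W l x j.
Proof. by rewrite mxpowD mxE. Qed.

Lemma mxpow_ge0 k i j : 0 <= W k i j.
Proof.
elim: k i j => [|k IHk] i j; first by rewrite mxE ler0n.
by rewrite mxpowSE sumr_ge0.
Qed.

Lemma mxpow2E i j : W 2 i j = #|[pred u | e i u && e u j]|%:R.
Proof.
rewrite mxpowSE -sum1_card natr_sum [LHS]big_mkcond [RHS]big_mkcond /=.
apply: eq_bigr => m _.
by rewrite inE mxpow1E; case: (e i m); case: (e m j).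
Qed.

Hypothesis e_regular : forall x, degree e x = d.

Lemma card_nbhd i : #|[pred m | e i m]| = d.
Proof. by rewrite -(e_regular i) /degree cardsE. Qed.

Lemma sum_nbhd_const i (f : 'I_n -> rat) C :
  (forall m, e i m -> f m = C) -> \sum_(m | e i m) f m = dr * C.
Proof.
move=> fC; rewrite (eq_bigr _ fC) sumr_const.
by rewrite card_nbhd mulr_natl.
Qed.

Lemma mxpow_row_sum k i : \sum_j W k i j = dr ^+ k.
Proof.
elim: k i => [|k IHk] i.
  rewrite (bigD1 i) //= big1 => [|j ji]; first by rewrite mxE eqxx addr0.
  by rewrite mxE eq_sym (negbTE ji).
under eq_bigr do rewrite mxpowSE.
by rewrite exchange_big /= (sum_nbhd_const (fun m _ => IHk m)) exprS.
Qed.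

Hypothesis e_sym : forall x y, e x y = e y x.

Lemma mxpow_sym k i j : W k i j = W k j i.
Proof.
have adj_tr : (adj e)^T = adj e by apply/matrixP => x y; rewrite !mxE e_sym.
have := congr1 (fun M : 'M[rat]_n => M j i) (@mxpow_tr _ (adj e) k).
by rewrite /= mxE adj_tr.
Qed.

Lemma sum_sqr_mxpow k i : \sum_j W k i j ^+ 2 = W (k + k) i i.
Proof.
by rewrite mxpowDE; apply: eq_bigr => j _; rewrite expr2 [X in _ * X]mxpow_sym.
Qed.

Lemma mxpow2_diag i : W 2 i i = dr.
Proof.
rewrite mxpow2E -(card_nbhd i); congr (_%:R); apply: eq_card => m.
by rewrite !inE [e m i]e_sym andbb.
Qed.

Lemma sum_off_nbhd i (f : 'I_n -> rat) :
  \sum_m (if e i m then 0 else f m) = \sum_m f m - \sum_(m | e i m) f m.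
Proof.
rewrite [X in _ = X - _](bigID (e i)) /= [X in X - _]addrC addrK.
rewrite [RHS]big_mkcond.
by apply: eq_bigr => m _; case: (e i m).
Qed.

Section WalkCounts.

Hypothesis walks3 : forall p q, e p q -> W 3 p q = dr ^+ 2 - dr + 1.
Hypothesis walks5 :
  forall p q, e p q -> W 5 p q = dr ^+ 4 - dr ^+ 3 + dr ^+ 2 - dr + 1.

Variable p : 'I_n.

Lemma sum_sqr_walks2 : \sum_w W 2 p w ^+ 2 = dr * (dr ^+ 2 - dr + 1).
Proof.
rewrite sum_sqr_mxpow mxpowSE; apply: sum_nbhd_const => m pm.
by rewrite walks3 // e_sym.
Qed.

Lemma sum_sqr_walks3 :
  \sum_w W 3 p w ^+ 2 = dr * (dr ^+ 4 - dr ^+ 3 + dr ^+ 2 - dr + 1).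
Proof.
rewrite sum_sqr_mxpow mxpowSE; apply: sum_nbhd_const => m pm.
by rewrite walks5 // e_sym.
Qed.

Let walks3_off u := if e p u then 0 else W 3 p u.

Lemma sum_walks3_off : \sum_u walks3_off u = dr ^+ 2 - dr.
Proof.
rewrite sum_off_nbhd mxpow_row_sum (sum_nbhd_const (walks3 (p := p))).
by ring.
Qed.

Lemma sum_sqr_walks3_off : \sum_u walks3_off u ^+ 2 = (dr ^+ 2 - dr) ^+ 2.
Proof.
rewrite (eq_bigr (fun u => if e p u then 0 else W 3 p u ^+ 2)); last first.
  by move=> u _; rewrite /walks3_off; case: (e p u); rewrite ?expr0n.
rewrite sum_off_nbhd sum_sqr_walks3.
rewrite (sum_nbhd_const (fun m pm => congr1 (fun x => x ^+ 2) (walks3 pm))).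
by ring.
Qed.

Lemma walks3_off_mul0 u v : u != v -> walks3_off u * walks3_off v = 0.
Proof.
apply: sqr_sum_eq_sum_sqr; last by rewrite sum_walks3_off sum_sqr_walks3_off.
by move=> x; rewrite /walks3_off; case: (e p x); rewrite ?mxpow_ge0.
Qed.

Lemma walks3_off_gt0 w u : 0 < W 2 p w -> e w u -> ~~ e p u -> 0 < walks3_off u.
Proof.
move=> pw_gt0 wu pu; rewrite /walks3_off (negbTE pu) (mxpowDE 2 1) (bigD1 w) //.
rewrite mxpow1E wu mulr1; apply: (lt_le_trans pw_gt0); rewrite lerDl.
by apply: sumr_ge0 => x _; apply: mulr_ge0; apply: mxpow_ge0.
Qed.

Lemma walks2_gt0_ge w : 0 < W 2 p w -> dr - 1 <= W 2 p w.
Proof.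
move=> pw_gt0.
have private_le1 : (#|[pred u | e w u && ~~ e p u]| <= 1)%N.
  apply/card_le1_eqP => u v; rewrite !inE => /andP[wu pu] /andP[wv pv].
  apply/eqP/negPn/negP => uv.
  have := mulr_gt0 (walks3_off_gt0 pw_gt0 wu pu) (walks3_off_gt0 pw_gt0 wv pv).
  by rewrite walks3_off_mul0 ?ltxx // eq_sym.
have common : W 2 p w = #|[pred u | e w u && e p u]|%:R.
  rewrite mxpow_sym mxpow2E; congr (_%:R); apply: eq_card => u.
  by rewrite !inE [e u p]e_sym.
have split_nbhd : (#|[pred u | e w u && e p u]| +
    #|[pred u | e w u && ~~ e p u]|)%N = d.
  have := cardID (e p) [pred m | e w m]; rewrite card_nbhd => <-.
  by congr (_ + _)%N; apply: eq_card => u; rewrite !inE andbC.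
by rewrite common lerBlDr natr1 ler_nat -split_nbhd -addn1 leq_add2l.
Qed.

Lemma sum_walks2_excess : \sum_w W 2 p w * (W 2 p w - (dr - 1)) = dr.
Proof.
under eq_bigr do rewrite mulrBr -expr2.
by rewrite sumrB -mulr_suml sum_sqr_walks2 mxpow_row_sum; ring.
Qed.

Lemma walks2_dichotomy q : q != p -> W 2 p q = 0 \/ W 2 p q = dr - 1.
Proof.
move=> qp.
have excess_ge0 w : 0 <= W 2 p w * (W 2 p w - (dr - 1)).
  move: (mxpow_ge0 2 p w); rewrite le_eqVlt => /orP[/eqP <-|pw_gt0].
    by rewrite mul0r.
  by rewrite mulr_ge0 ?subr_ge0 ?walks2_gt0_ge // ltW.
have others0 : \sum_(w | w != p) W 2 p w * (W 2 p w - (dr - 1)) = 0.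
  have := sum_walks2_excess; rewrite (bigD1 p) // mxpow2_diag.
  rewrite (_ : dr * (dr - (dr - 1)) = dr); last by ring.
  by move/(canRL (addKr dr)); rewrite addNr.
move: (psumr_eq0P (fun w _ => excess_ge0 w) others0 (i := q) qp) => /eqP.
by rewrite mulf_eq0 subr_eq0 => /orP[] /eqP; [left|right].
Qed.

End WalkCounts.

End RegularGraph.

Theorem lemma4 (N : nat) (n : nat) (e : rel 'I_n) :
  (2 <= N)%N ->
  simple_graph e ->
  bipartite e ->
  (forall x : 'I_n, degree e x = (N - 1)%N) ->
  (forall p q : 'I_n, e p q ->
     mxpow (adj e) 3 p q = (((N - 1)%N)%:R ^+ 3 + 1) / N%:R /\
     mxpow (adj e) 5 p q = (((N - 1)%N)%:R ^+ 5 + 1) / N%:R) ->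
  forall p q : 'I_n, p != q -> mxpow (adj e) 2 p q <= (N - 2)%N%:R.
Proof.
case: N => [|[|k]] // _ [_ e_sym] _ e_regular walks p q pq.
rewrite !subSS !subn0 -[k.+2%:R]natr1 in e_regular walks *.
have k2_neq0 : k.+1%:R + 1 != 0 :> rat by rewrite natr1 pnatr_eq0.
have walks3 x y : e x y -> mxpow (adj e) 3 x y = k.+1%:R ^+ 2 - k.+1%:R + 1.
  by move/walks => [-> _]; rewrite cube_add1_div.
have walks5 x y : e x y -> mxpow (adj e) 5 x y =
    k.+1%:R ^+ 4 - k.+1%:R ^+ 3 + k.+1%:R ^+ 2 - k.+1%:R + 1.
  by move/walks => [_ ->]; rewrite pow5_add1_div.
rewrite eq_sym in pq.
case: (walks2_dichotomy e_regular e_sym walks3 walks5 pq) => ->.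
  by rewrite ler0n.
by rewrite -natr1 addrK.
Qed.
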